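(* Let $\Gamma$ be a finite connected graph, let $\emptyset\ne Y\subset Z$ be subsets of its vertex set, and let $s$ be a nonnegative integer-valued function on the vertices. Let $H_w(s,Y)$ be the expected number of particles stopping in $Y$ if $s(x)$ particles start at each vertex $x$ and perform independent simple random walks stopped on first hitting $Z$, and let $H_r(s,Y)$ be the number of particles stopping in $Y$ if instead they perform rotor-router walks (one at a time, rotors not reset) stopped on first hitting $Z$. Let $H(x)=H_w(1_x,Y)$. Then $$|H_r(s,Y)-H_w(s,Y)|\le\sum_{u}\sum_{v\sim u}|H(u)-H(v)|,$$ independently of $s$, of the initial rotor configuration, and of the cyclic orderings.
   Context: Rotor-router walk on $\Gamma$: each vertex has a fixed cyclic ordering of its neighbors and a rotor pointing to one of them; a particle at $u$ advances the rotor at $u$ to the next neighbor in the cyclic order and then moves to that neighbor. The outer sum is over all vertices $u$ of $\Gamma$ and the inner sum over neighbors $v$ of $u$. *)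

From mathcomp Require Import all_boot.
From Stdlib Require Import Reals.
Set Implicit Arguments. Unset Strict Implicit. Unset Printing Implicit Defensive.

Section RotorDefs.
Variable V : finType.

Definition rsum (I : finType) (P : pred I) (f : I -> R) : R :=
  \big[Rplus/0%R]_(i | P i) f i.

Definition deg (adj : rel V) (u : V) : nat := #|[pred v | adj u v]|.

(* firstp adj Y Z n x : probability that simple random walk started at x,
   stopped on first hitting Z, stops exactly at step n and at a vertex of Y. *)
Fixpoint firstp (adj : rel V) (Y Z : {set V}) (n : nat) (x : V) : R :=
  match n with
  | 0 => if x \in Y then 1%R else 0%R
  | n'.+1 => if x \in Z then 0%R
             else (/ INR (deg adj x) *
                   rsum (fun v => adj x v) (fun v => firstp adj Y Z n' v))%R
  end.

(* Rotor configuration: rot u is the neighbour the rotor at u points to.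
   nbrs u is the cyclic ordering of the neighbours of u.  A particle at u
   advances the rotor to the next neighbour in the cyclic order, then moves
   there. *)
Definition advance (nbrs : V -> seq V) (rot : V -> V) (u : V) : V -> V :=
  fun w => if w == u then next (nbrs u) (rot u) else rot w.

Inductive rr_walk (nbrs : V -> seq V) (Z : {set V})
  : (V -> V) -> V -> (V -> V) -> V -> Prop :=
| rr_stop rot x : x \in Z -> rr_walk nbrs Z rot x rot x
| rr_step rot x rot' y :
    x \notin Z ->
    rr_walk nbrs Z (advance nbrs rot x) (next (nbrs x) (rot x)) rot' y ->
    rr_walk nbrs Z rot x rot' y.

Inductive rr_process (nbrs : V -> seq V) (Y Z : {set V})
  : (V -> V) -> seq V -> (V -> V) -> nat -> Prop :=
| rrp_nil rot : rr_process nbrs Y Z rot [::] rot 0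
| rrp_cons rot x l rot1 y rot2 n :
    rr_walk nbrs Z rot x rot1 y ->
    rr_process nbrs Y Z rot1 l rot2 n ->
    rr_process nbrs Y Z rot (x :: l) rot2 (n + (y \in Y)).
End RotorDefs.

From HB Require Import structures.
From mathcomp Require Import all_boot.
From Stdlib Require Import Reals Lra.
Set Implicit Arguments. Unset Strict Implicit. Unset Printing Implicit Defensive.

(* Off Z the hitting probability H is harmonic, so at every vertex u the
   weights H u - H v over the neighbours v of u sum to zero.  Store in the
   rotor at u the partial sum of these weights along the cyclic order of the
   neighbours, up to and including the neighbour the rotor points to.  When a
   particle leaves u, the rotor advances by one neighbour v and its stored
   value grows by H u - H v, which exactly compensates the change H u -> H v
   of the particle's value; wrapping around the cycle is harmless because the
   full sum is zero.  Hence "H(particle) + total rotor potential" is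
   conserved, and a particle stopped in Z has value 1 if it stopped in Y and
   0 otherwise.  So H_r(s,Y) - H_w(s,Y) is the change of total potential,
   bounded rotor by rotor by the sum of |H u - H v| over the neighbours. *)

HB.instance Definition _ := Monoid.isComLaw.Build R 0%R Rplus
  (fun a b c => esym (Rplus_assoc a b c)) Rplus_comm Rplus_0_l.

Lemma Un_cv_const (c : R) : Un_cv (fun _ => c) c.
Proof.
by move=> eps eps_gt0; exists 0%N => n _; rewrite /Rdist Rminus_diag_eq // Rabs_R0.
Qed.

Section RealBigSums.
Variable I : eqType.
Implicit Types (r : seq I) (P : pred I) (f g : I -> R).

Lemma Rabs_big_le r P f :
  (Rabs (\big[Rplus/0%R]_(i <- r | P i) f i)
   <= \big[Rplus/0%R]_(i <- r | P i) Rabs (f i))%R.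
Proof.
apply: (big_ind2 (fun a b => Rabs a <= b)%R) => [|a b c d Hab Hcd|i _].
- by rewrite Rabs_R0; apply: Rle_refl.
- by apply: Rle_trans (Rabs_triang _ _) _; apply: Rplus_le_compat.
- exact: Rle_refl.
Qed.

Lemma big_Rle r P f g :
  (forall i, P i -> f i <= g i)%R ->
  (\big[Rplus/0%R]_(i <- r | P i) f i <= \big[Rplus/0%R]_(i <- r | P i) g i)%R.
Proof.
move=> le_fg; apply: (big_ind2 Rle) => [|a b c d ? ?|//]; first exact: Rle_refl.
exact: Rplus_le_compat.
Qed.

Lemma big_Rminus r P f g :
  \big[Rplus/0%R]_(i <- r | P i) (f i - g i)%R =
  (\big[Rplus/0%R]_(i <- r | P i) f i - \big[Rplus/0%R]_(i <- r | P i) g i)%R.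
Proof.
rewrite /Rminus big_split /=; congr Rplus.
by rewrite (big_morph Ropp Ropp_plus_distr Ropp_0).
Qed.

Lemma big_Rconst r (c : R) :
  \big[Rplus/0%R]_(i <- r) c = (INR (size r) * c)%R.
Proof.
elim: r => [|a r IH]; first by rewrite big_nil /=; ring.
by rewrite big_cons IH (S_INR (size r)); ring.
Qed.

Lemma big_Un_cv r P (u : I -> nat -> R) (l : I -> R) :
  (forall i, Un_cv (u i) (l i)) ->
  Un_cv (fun n => \big[Rplus/0%R]_(i <- r | P i) u i n)
        (\big[Rplus/0%R]_(i <- r | P i) l i).
Proof.
move=> cv_u; elim: r => [|a r IH].
  rewrite big_nil; apply: Un_cv_ext (Un_cv_const 0%R) => n; by rewrite big_nil.
rewrite big_cons; case Pa: (P a); last first.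
  by apply: Un_cv_ext IH => n; rewrite big_cons Pa.
apply: Un_cv_ext (CV_plus _ _ _ _ (cv_u a) IH) => n.
by rewrite big_cons Pa.
Qed.
End RealBigSums.

Lemma big_count_mem (V : finType) (h : V -> R) (l : seq V) :
  \big[Rplus/0%R]_(x <- l) h x = rsum predT (fun x => INR (count_mem x l) * h x)%R.
Proof.
rewrite /rsum; elim: l => [|a l IH].
  by rewrite big_nil big1 // => x _; rewrite Rmult_0_l.
rewrite big_cons IH.
under [in RHS]eq_bigr => x _ do rewrite /= -plusE plus_INR Rmult_plus_distr_r.
rewrite big_split /=; congr Rplus.
rewrite (bigD1 a) //= eqxx big1 => [|x ne_xa]; first by rewrite /=; ring.
by rewrite eq_sym (negbTE ne_xa) Rmult_0_l.
Qed.

Section CyclicPrefixSums.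
Variables (T : eqType) (f : T -> R).

Definition prefix_sum (s : seq T) (k : nat) : R :=
  \big[Rplus/0%R]_(x <- take k s) f x.

Lemma prefix_sum_diff_le s i j :
  (Rabs (prefix_sum s i - prefix_sum s j) <= \big[Rplus/0%R]_(x <- s) Rabs (f x))%R.
Proof.
have prefix0 t : prefix_sum t 0 = 0%R by rewrite /prefix_sum take0 big_nil.
elim: s i j => [|a s IH] i j.
  rewrite /prefix_sum /= !big_nil Rminus_0_r Rabs_R0; exact: Rle_refl.
have prefix_cons k : prefix_sum (a :: s) k.+1 = (f a + prefix_sum s k)%R.
  by rewrite /prefix_sum /= big_cons.
have bound k : (Rabs (prefix_sum s k) <= \big[Rplus/0%R]_(x <- s) Rabs (f x))%R.
  by have := IH k 0%N; rewrite prefix0 Rminus_0_r.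
have := Rabs_pos (f a); rewrite big_cons.
case: i j => [|i] [|j]; rewrite ?prefix_cons ?prefix0.
- by rewrite Rminus_0_r Rabs_R0; have := bound 0%N; split_Rabs; lra.
- by have := bound j; split_Rabs; lra.
- by have := bound i; split_Rabs; lra.
- by have := IH i j; split_Rabs; lra.
Qed.

(* Advancing a pointer w along the cycle s adds f at the new position, provided
   f sums to zero over s (this takes care of the wrap-around). *)
Lemma prefix_sum_next s w :
  uniq s -> w \in s -> \big[Rplus/0%R]_(x <- s) f x = 0%R ->
  prefix_sum s (index (next s w) s).+1 = (prefix_sum s (index w s).+1 + f (next s w))%R.
Proof.
move=> uniq_s w_in_s sum0; rewrite next_nth w_in_s.
case: s uniq_s w_in_s sum0 => [//|a s] uniq_s w_in_s sum0.
have lt_w : index w (a :: s) < (size s).+1 by rewrite -[(size s).+1]/(size (a :: s)) index_mem.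
case: (ltnP (index w (a :: s)) (size s)) => [lt_ws | ge_ws].
  have -> : nth a s (index w (a :: s)) = nth a (a :: s) (index w (a :: s)).+1 by [].
  rewrite index_uniq // /prefix_sum (take_nth a (n := (index w _).+1)) //.
  by rewrite -cats1 big_cat big_seq1.
have last_w : index w (a :: s) = size s by apply/eqP; rewrite eqn_leq ge_ws -ltnS lt_w.
rewrite last_w nth_default //= eqxx /prefix_sum /= take0 take_size big_cons big_nil.
by rewrite sum0; ring.
Qed.
End CyclicPrefixSums.

Section RotorPotential.
Variables (V : finType) (nbrs : V -> seq V) (H : V -> R).

Definition rotor_weight (u w : V) : R :=
  prefix_sum (fun v => H u - H v)%R (nbrs u) (index w (nbrs u)).+1.

Definition potential (rot : V -> V) : R := rsum predT (fun u => rotor_weight u (rot u)).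

Lemma potential_advance rot x :
  potential (advance nbrs rot x) =
  (potential rot + (rotor_weight x (next (nbrs x) (rot x)) - rotor_weight x (rot x)))%R.
Proof.
rewrite /potential /rsum (bigD1 x) //= [in RHS](bigD1 x) //= /advance eqxx.
rewrite (eq_bigr (fun u => rotor_weight u (rot u))) => [|u ne_ux]; first ring.
by rewrite (negbTE ne_ux).
Qed.

Lemma potential_diff_le rot rot' :
  (Rabs (potential rot - potential rot')
   <= rsum predT (fun u => \big[Rplus/0%R]_(v <- nbrs u) Rabs (H u - H v)))%R.
Proof.
rewrite /potential /rsum -big_Rminus; apply: Rle_trans (Rabs_big_le _ _ _) _.
by apply: big_Rle => u _; apply: prefix_sum_diff_le.
Qed.

Variables (Y Z : {set V}).
Hypothesis nbrs_uniq : forall u, uniq (nbrs u).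
Hypothesis H_harmonic :
  forall u, u \notin Z -> \big[Rplus/0%R]_(v <- nbrs u) (H u - H v)%R = 0%R.
Hypothesis H_boundary : forall y, y \in Z -> H y = if y \in Y then 1%R else 0%R.

Lemma rotor_weight_next u w :
  u \notin Z -> w \in nbrs u ->
  rotor_weight u (next (nbrs u) w) = (rotor_weight u w + (H u - H (next (nbrs u) w)))%R.
Proof. by move=> u_notin_Z w_nbr; apply: prefix_sum_next; last exact: H_harmonic. Qed.

Definition rotors_ok (rot : V -> V) : Prop := forall u, u \notin Z -> rot u \in nbrs u.

Lemma rr_walk_conserve rot x rot' y :
  rr_walk nbrs Z rot x rot' y -> rotors_ok rot ->
  [/\ (H x + potential rot = H y + potential rot')%R, rotors_ok rot' & y \in Z].
Proof.
elim=> {rot x rot' y} [rot x x_in_Z | rot x rot' y x_notin_Z _ IH] ok_rot.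
  by split.
have ok_adv : rotors_ok (advance nbrs rot x).
  move=> u u_notin_Z; rewrite /advance; case: eqP => [->|_]; last exact: ok_rot.
  by rewrite mem_next; apply: ok_rot.
have [conserved ok_rot' y_in_Z] := IH ok_adv; split=> //.
rewrite -conserved potential_advance rotor_weight_next //; last exact: ok_rot.
ring.
Qed.

Lemma rr_process_conserve rot l rot' n :
  rr_process nbrs Y Z rot l rot' n -> rotors_ok rot ->
  (\big[Rplus/0%R]_(x <- l) H x + potential rot = INR n + potential rot')%R.
Proof.
elim=> {rot l rot' n} [rot | rot x l rot1 y rot2 n walk _ IH] ok_rot.
  by rewrite big_nil Rplus_0_l.
have [conserved ok_rot1 y_in_Z] := rr_walk_conserve walk ok_rot.
rewrite big_cons -plusE plus_INR; move: (IH ok_rot1) conserved.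
by rewrite (H_boundary y_in_Z); case: (y \in Y) => /=; lra.
Qed.

Theorem rr_process_discrepancy rot0 starts rotf n :
  rr_process nbrs Y Z rot0 starts rotf n -> rotors_ok rot0 ->
  (Rabs (INR n - \big[Rplus/0%R]_(x <- starts) H x)
   <= rsum predT (fun u => \big[Rplus/0%R]_(v <- nbrs u) Rabs (H u - H v)))%R.
Proof.
move=> run ok_rot0; have conserved := rr_process_conserve run ok_rot0.
have -> : (INR n - \big[Rplus/0%R]_(x <- starts) H x = potential rot0 - potential rotf)%R
  by lra.
exact: potential_diff_le.
Qed.
End RotorPotential.

Section HittingProbability.
Variables (V : finType) (adj : rel V) (Y Z : {set V}) (H : V -> R).
Hypothesis YZ : Y \subset Z.
Hypothesis H_def : forall x, infinite_sum (fun n => firstp adj Y Z n x) (H x).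

(* A walk started in Z stops immediately. *)
Lemma hit_prob_boundary y : y \in Z -> H y = if y \in Y then 1%R else 0%R.
Proof.
move=> y_in_Z; apply: (UL_sequence _ _ _ (H_def y)).
apply: Un_cv_ext (Un_cv_const _); elim=> [|n IH] //=.
by rewrite -IH y_in_Z Rplus_0_r.
Qed.

Lemma hit_prob_mean u :
  u \notin Z -> H u = (/ INR (deg adj u) * rsum (fun v => adj u v) H)%R.
Proof.
move=> u_notin_Z; have u_notin_Y : u \notin Y by apply: contra u_notin_Z; apply: subsetP.
have step N : sum_f_R0 (fun n => firstp adj Y Z n u) N.+1 =
  (/ INR (deg adj u) *
   rsum (fun v => adj u v) (fun v => sum_f_R0 (fun n => firstp adj Y Z n v) N))%R.
  elim: N => [|N IH]; first by rewrite /= (negbTE u_notin_Z) (negbTE u_notin_Y) Rplus_0_l.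
  rewrite tech5 IH [firstp _ _ _ N.+2 u]/= (negbTE u_notin_Z) -Rmult_plus_distr_l.
  by rewrite /rsum -big_split.
apply: (UL_sequence (fun N => sum_f_R0 (fun n => firstp adj Y Z n u) N.+1)).
  move=> eps eps_gt0; have [N HN] := H_def u eps_gt0.
  by exists N => n le_Nn; apply: HN; apply/leP; apply: leqW; apply/leP.
apply: Un_cv_ext (CV_mult _ _ _ _ (Un_cv_const _) (big_Un_cv _ _ (fun v => H_def v))).
by move=> N; rewrite step.
Qed.
End HittingProbability.

Section NeighbourLists.
Variables (V : finType) (adj : rel V) (nbrs : V -> seq V).
Hypothesis nbrs_uniq : forall u, uniq (nbrs u).
Hypothesis nbrs_adj : forall u v, (v \in nbrs u) = adj u v.

Lemma rsum_nbrs u (f : V -> R) :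
  rsum (fun v => adj u v) f = \big[Rplus/0%R]_(v <- nbrs u) f v.
Proof.
rewrite /rsum -big_filter; apply: perm_big; apply: uniq_perm.
- by rewrite filter_uniq // index_enum_uniq.
- exact: nbrs_uniq.
- by move=> v; rewrite mem_filter mem_index_enum andbT nbrs_adj.
Qed.

Lemma deg_nbrs u : deg adj u = size (nbrs u).
Proof.
rewrite /deg cardE; apply: perm_size; apply: uniq_perm.
- exact: enum_uniq.
- exact: nbrs_uniq.
- by move=> v; rewrite mem_enum nbrs_adj.
Qed.

Lemma nbrs_nonempty (Z : {set V}) u :
  (forall x y, connect adj x y) -> Z != set0 -> u \notin Z -> nbrs u != [::].
Proof.
move=> conn /set0Pn [z z_in_Z] u_notin_Z.
have /connectP [[|v p] /= path_p last_p] := conn u z.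
  by move: u_notin_Z; rewrite -last_p z_in_Z.
case/andP: path_p => adj_uv _; apply/eqP => nil_u.
by move: adj_uv; rewrite -nbrs_adj nil_u.
Qed.

Lemma mean_value_balanced (H : V -> R) u :
  nbrs u != [::] -> H u = (/ INR (deg adj u) * rsum (fun v => adj u v) H)%R ->
  \big[Rplus/0%R]_(v <- nbrs u) (H u - H v)%R = 0%R.
Proof.
move=> nonempty_u mean_u.
have deg_neq0 : INR (deg adj u) <> 0%R.
  by rewrite deg_nbrs; apply: not_0_INR => /eqP; rewrite size_eq0; apply/negP.
rewrite big_Rminus big_Rconst -rsum_nbrs -deg_nbrs {1}mean_u; field; exact: deg_neq0.
Qed.
End NeighbourLists.

Theorem mainTheorem12
  (V : finType) (adj : rel V)
  (adj_sym : symmetric adj) (adj_irr : irreflexive adj)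
  (adj_conn : forall x y : V, connect adj x y)
  (Y Z : {set V}) (HY0 : Y != set0) (HYZ : Y \subset Z)
  (H : V -> R)
  (H_def : forall x, infinite_sum (fun n => firstp adj Y Z n x) (H x))
  (nbrs : V -> seq V)
  (nbrs_uniq : forall u, uniq (nbrs u))
  (nbrs_adj : forall u v, (v \in nbrs u) = adj u v)
  (rot0 : V -> V)
  (rot0_ok : forall u, nbrs u != [::] -> rot0 u \in nbrs u)
  (s : V -> nat) (starts : seq V)
  (starts_s : forall x, count_mem x starts = s x)
  (rotf : V -> V) (Hr : nat)
  (Hrun : rr_process nbrs Y Z rot0 starts rotf Hr) :
  (Rabs (INR Hr - rsum predT (fun x => INR (s x) * H x))
   <= rsum predT (fun u => rsum (fun v => adj u v) (fun v => Rabs (H u - H v))))%R.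
Proof.
have Z_neq0 : Z != set0.
  by case/set0Pn: HY0 => y y_in_Y; apply/set0Pn; exists y; apply: (subsetP HYZ).
have nonempty u : u \notin Z -> nbrs u != [::].
  by move=> u_notin_Z; apply: (nbrs_nonempty nbrs_adj adj_conn Z_neq0 u_notin_Z).
have harmonic u : u \notin Z -> \big[Rplus/0%R]_(v <- nbrs u) (H u - H v)%R = 0%R.
  move=> u_notin_Z; apply: (mean_value_balanced nbrs_uniq nbrs_adj (nonempty u u_notin_Z)).
  exact: (hit_prob_mean HYZ H_def u_notin_Z).
have ok_rot0 : rotors_ok nbrs Z rot0 by move=> u /nonempty; apply: rot0_ok.
have -> : rsum predT (fun x => INR (s x) * H x)%R = \big[Rplus/0%R]_(x <- starts) H x.
  by rewrite big_count_mem; apply: eq_bigr => x _; rewrite starts_s.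
have -> : rsum predT (fun u => rsum (fun v => adj u v) (fun v => Rabs (H u - H v))) =
          rsum predT (fun u => \big[Rplus/0%R]_(v <- nbrs u) Rabs (H u - H v)).
  by apply: eq_bigr => u _; apply: rsum_nbrs.
exact: (rr_process_discrepancy nbrs_uniq harmonic (hit_prob_boundary H_def) Hrun ok_rot0).
Qed.
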